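(* Let $n\ge 3$ and $N=r(n,n)$. Let $G$ be a bichromatic graph on $N$ vertices, and suppose $G$ contains distinct unbuilt pairs $p_1,\ldots,p_s$ and distinct unbuilt pairs $q_1,\ldots,q_t$ such that $p_i$ is independent to $q_j$ for every $1\le i\le s$ and $1\le j\le t$. Then $s(G)\ge \min(s,t)$.
   Context: $r(n,n)$ is the least $N$ such that every red/blue colouring of the edges of $K_N$ contains a monochromatic $K_n$. A bichromatic graph is a triple $G=(V,R,B)$ with $R,B\subseteq\binom{V}{2}$ and $R\cap B=\emptyset$; $R$ are the red edges, $B$ the blue edges, and $e(G)=|R|+|B|$. An unbuilt pair of $G$ is a pair of distinct vertices $u,v$ with $uv\notin R\cup B$. Two vertex-disjoint pairs $(u_1,u_2)$ and $(v_1,v_2)$ are independent in $G$ if both are unbuilt and there exist a red edge $u_iv_j\in R$ and a blue edge $u_{i'}v_{j'}\in B$ for some (not necessarily distinct) $i,i',j,j'\in\{1,2\}$. The $(n,n;N)$-game: Builder and Painter play on $N$ vertices; each turn Builder builds an edge between two non-adjacent vertices and Painter colours it red or blue; Builder wins once a monochromatic $K_n$ (red or blue) appears. For a bichromatic graph $G$ on $N$ vertices, $s(G)$ is the largest nonnegative integer $s$ such that Builder has a strategy that, starting the $(n,n;N)$-game from the position $G$ (its already built and coloured edges), guarantees a win using at most $\binom{N}{2}-e(G)-s$ further moves regardless of Painter's play. *)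

From mathcomp Require Import all_boot.
Set Implicit Arguments. Unset Strict Implicit. Unset Printing Implicit Defensive.

Definition is_pair (N : nat) (e : {set 'I_N}) : bool := #|e| == 2.

(* A red/blue colouring of the edges of K_N (true = red, false = blue);
   only the values on 2-element sets matter. *)
Definition colouring (N : nat) := {ffun {set 'I_N} -> bool}.

Definition has_mono_Kn (n N : nat) (c : colouring N) : Prop :=
  exists (S : {set 'I_N}) (b : bool), #|S| = n /\
    forall e : {set 'I_N}, is_pair e -> e \subset S -> c e = b.

Definition ramsey_prop (n N : nat) : Prop := forall c : colouring N, has_mono_Kn n c.

Definition is_ramsey_number (n N : nat) : Prop :=
  ramsey_prop n N /\ forall M, M < N -> ~ ramsey_prop n M.

Definition bigraph (N : nat) := ({set {set 'I_N}} * {set {set 'I_N}})%type.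

Definition red (N : nat) (G : bigraph N) := G.1.
Definition blue (N : nat) (G : bigraph N) := G.2.

Definition is_bichromatic (N : nat) (G : bigraph N) : Prop :=
  (forall e, e \in red G -> is_pair e) /\ (forall e, e \in blue G -> is_pair e) /\
  [disjoint red G & blue G].

Definition num_edges (N : nat) (G : bigraph N) : nat := #|red G| + #|blue G|.

Definition unbuilt (N : nat) (G : bigraph N) (e : {set 'I_N}) : bool :=
  is_pair e && (e \notin red G) && (e \notin blue G).

Definition independent (N : nat) (G : bigraph N) (p q : {set 'I_N}) : Prop :=
  [disjoint p & q] /\ unbuilt G p /\ unbuilt G q /\
  (exists u v, [/\ u \in p, v \in q & [set u; v] \in red G]) /\
  (exists u v, [/\ u \in p, v \in q & [set u; v] \in blue G]).

Definition mono_Kn (n N : nat) (G : bigraph N) : bool :=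
  [exists S : {set 'I_N}, (#|S| == n) &&
     ([forall e : {set 'I_N}, (is_pair e && (e \subset S)) ==> (e \in red G)] ||
      [forall e : {set 'I_N}, (is_pair e && (e \subset S)) ==> (e \in blue G)])].

Definition add_edge (N : nat) (G : bigraph N) (e : {set 'I_N}) (c : bool) : bigraph N :=
  if c then (e |: red G, blue G) else (red G, e |: blue G).

Fixpoint builder_wins (n N : nat) (k : nat) (G : bigraph N) : bool :=
  mono_Kn n G ||
  (if k is k'.+1 then
     [exists e : {set 'I_N}, unbuilt G e &&
        [forall c : bool, builder_wins n k' (add_edge G e c)]]
   else false).

Definition sG (n N : nat) (G : bigraph N) : nat :=
  \max_(s < 'C(N, 2).+1 | (s <= 'C(N, 2) - num_edges G) &&
                          builder_wins n ('C(N, 2) - num_edges G - s) G) s.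

From mathcomp Require Import all_boot zify.
Set Implicit Arguments. Unset Strict Implicit. Unset Printing Implicit Defensive.

(* Builder first builds every unbuilt pair outside P and Q, in any order; call
   the result H.  From H, building all of P, or else all of Q, already forces a
   monochromatic K_n.  Otherwise pick paintings of P and of Q that avoid one,
   merge them with H into a colouring of K_N, and take a monochromatic K_n in
   it, which exists since N = r(n,n).  If it contains no pair of Q it is
   monochromatic in H with the painting of P, and symmetrically; so it contains
   some p in P and some q in Q, and independence puts a red and a blue edge of H
   between them.  Hence Builder wins while min(|P|,|Q|) unbuilt pairs stay
   unbuilt. *)

Section Bigraphs.

Variable N : nat.
Implicit Types (G H : bigraph N) (E : {set {set 'I_N}}) (e p q S : {set 'I_N}).
Implicit Types (f : colouring N).

Definition paint G E f : bigraph N :=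
  (red G :|: [set e in E | f e], blue G :|: [set e in E | ~~ f e]).

Lemma unbuilt_paint G E f e : unbuilt (paint G E f) e = unbuilt G e && (e \notin E).
Proof.
rewrite /unbuilt /red /blue /= !inE.
by case: (e \in E); case: (f e); rewrite ?orbT ?orbF ?andbF ?andbT.
Qed.

Lemma paint0 G f : paint G set0 f = G.
Proof.
case: G => R B; rewrite /paint /red /blue /=.
by congr pair; rewrite -[RHS]setU0; congr (_ :|: _); apply/setP => x; rewrite !inE.
Qed.

Lemma unbuilt_add_edge G e c x : unbuilt (add_edge G e c) x = unbuilt G x && (x != e).
Proof.
rewrite /unbuilt /add_edge; case: c; rewrite /red /blue /= !inE;
by case: eqP; rewrite ?andbT ?andbF.
Qed.

Lemma paint_add_edge G E f e c : e \in E ->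
  paint (add_edge G e c) (E :\ e) f = paint G E [ffun x => if x == e then c else f x].
Proof.
move=> eE; rewrite /paint /add_edge.
by case: c; congr (_, _); apply/setP => x; rewrite /red /blue /= !inE ffunE;
  case: eqP => [->|]; rewrite ?eE ?orbT ?orbF.
Qed.

Lemma paint_disjoint G E f :
  [disjoint red G & blue G] -> {in E, forall e, unbuilt G e} ->
  [disjoint red (paint G E f) & blue (paint G E f)].
Proof.
move=> dRB unbE; rewrite -setI_eq0; apply/eqP/setP => e; rewrite /red /blue /= !inE.
case eE: (e \in E); last by rewrite /= !orbF -in_setI (disjoint_setI0 dRB) inE.
by move: (unbE e eE); rewrite /unbuilt => /andP[/andP[_ /negbTE->] /negbTE->]; case: (f e).
Qed.

Lemma independent_paint G E f p q : p \notin E -> q \notin E ->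
  independent G p q -> independent (paint G E f) p q.
Proof.
move=> pE qE [dpq [unbp [unbq [[u [v [up vq uvR]]] [u' [v' [up' vq' uvB]]]]]]].
do !split; rewrite ?unbuilt_paint ?unbp ?unbq ?pE ?qE //.
- by exists u, v; split; rewrite // /red inE uvR.
- by exists u', v'; split; rewrite // /blue inE uvB.
Qed.

Lemma cross_pair_sub p q S u v : [disjoint p & q] -> p \subset S -> q \subset S ->
  u \in p -> v \in q -> is_pair [set u; v] /\ [set u; v] \subset S.
Proof.
move=> dpq pS qS up vq; split.
  have uv : u != v by apply: contraTneq vq => <-; rewrite (disjointFr dpq up).
  by rewrite /is_pair cards2 uv.
by apply/subsetP => x; rewrite !inE => /orP[]/eqP->; [apply: (subsetP pS) | apply: (subsetP qS)].
Qed.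

Lemma built_neq_unbuilt H x y :
  (x \in red H) || (x \in blue H) -> unbuilt H y -> x != y.
Proof.
move=> builtx /andP[/andP[_ yR] yB]; apply: contraTneq builtx => ->.
by rewrite negb_or yR yB.
Qed.

Definition unbuilt_pairs G := [set e | unbuilt G e].

Lemma num_edges_add_unbuilt G :
  is_bichromatic G -> num_edges G + #|unbuilt_pairs G| = 'C(N, 2).
Proof.
case=> pairR [pairB dRB].
pose pairs := [set e : {set 'I_N} | #|e| == 2].
have <- : #|pairs| = 'C(N, 2) by rewrite card_draws card_ord.
rewrite -(cardsID (red G :|: blue G) pairs).
have -> : pairs :&: (red G :|: blue G) = red G :|: blue G.
  by apply/setIidPr/subsetP => e; rewrite !inE => /orP[/pairR | /pairB].
have -> : pairs :\: (red G :|: blue G) = unbuilt_pairs G.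
  by apply/setP => e; rewrite !inE /unbuilt /is_pair negb_or andbC andbA.
by rewrite /num_edges -cardsUI (disjoint_setI0 dRB) cards0 addn0.
Qed.

Lemma independent_irrefl G p : ~ independent G p p.
Proof.
move=> [dpp [/andP[/andP[pairp _] _] _]].
by move: pairp; rewrite /is_pair -(setIid p) (disjoint_setI0 dpp) cards0.
Qed.

End Bigraphs.

Section Game.

Variables n N : nat.
Implicit Types (G H : bigraph N) (E P Q : {set {set 'I_N}}) (e p q S : {set 'I_N}).
Implicit Types (f : colouring N).

Lemma builder_wins0 G : builder_wins n 0 G = mono_Kn n G.
Proof. by rewrite /= orbF. Qed.

Lemma builder_wins_monotone k k' G : k <= k' -> builder_wins n k G -> builder_wins n k' G.
Proof.
elim: k k' G => [|k IH] [|k'] G //= lekk'; first by rewrite orbF => ->.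
case/orP => [->//|/existsP[e /andP[unbe /forallP wins]]].
apply/orP; right; apply/existsP; exists e; rewrite unbe.
by apply/forallP => c; apply: IH lekk' (wins c).
Qed.

Lemma builder_wins_paint E k G : {in E, forall e, unbuilt G e} ->
  (forall f, builder_wins n k (paint G E f)) -> builder_wins n (#|E| + k) G.
Proof.
move cardE: #|E| => m; elim: m E G cardE => [|m IH] E G cardE unbE wins.
  have Eset0 : E = set0 by apply/eqP; rewrite -cards_eq0 cardE.
  by rewrite -(paint0 G [ffun=> true]) -Eset0.
have [e eE] : exists e, e \in E by apply/card_gt0P; rewrite cardE.
rewrite addSn /=; apply/orP; right; apply/existsP; exists e; rewrite unbE //=.
apply/forallP => c; apply: (IH (E :\ e)) => [|x|f].
- by move: cardE; rewrite (cardsD1 e E) eE add1n => -[].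
- by rewrite unbuilt_add_edge => /setD1P[-> /unbE ->].
- by rewrite paint_add_edge.
Qed.

Lemma mono_Kn_paint H E f S b :
  #|S| = n -> (forall e, e \subset S -> unbuilt H e -> e \in E) ->
  (forall e, is_pair e -> e \subset S -> (if e \in E then f e else e \in red H) = b) ->
  mono_Kn n (paint H E f).
Proof.
move=> cardS builtS colS; apply/existsP; exists S; rewrite cardS eqxx /=.
apply/orP; case: b colS => colS; [left | right]; apply/forallP => e;
  apply/implyP => /andP[pe eS]; have := colS e pe eS;
  case: ifP => eE col; rewrite /red /blue /= !inE eE ?col ?orbT //.
by rewrite orbF; apply: contraFT eE => eB; apply: builtS eS _; rewrite /unbuilt pe col.
Qed.

Lemma mono_Kn_paint_either H P Q f1 f2 :
  ramsey_prop n N -> [disjoint red H & blue H] ->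
  (forall e, unbuilt H e -> (e \in P) || (e \in Q)) ->
  (forall p q, p \in P -> q \in Q -> independent H p q) ->
  mono_Kn n (paint H P f1) || mono_Kn n (paint H Q f2).
Proof.
move=> ramN dRB builtPQ indPQ.
pose c : colouring N :=
  [ffun e => if e \in Q then f2 e else if e \in P then f1 e else e \in red H].
have [S [b [cardS monoS]]] := ramN c.
case: (boolP [exists q in Q, q \subset S]) => [/exists_inP[q qQ qS] | noQ]; last first.
  apply/orP; left; apply: (mono_Kn_paint (b := b) cardS) => [e eS | e pe eS].
    by move/builtPQ/orP => [// | eQ]; case/negP: noQ; apply/exists_inP; exists e.
  have := monoS e pe eS; rewrite ffunE; case: ifP => // eQ.
  by case/negP: noQ; apply/exists_inP; exists e.
case: (boolP [exists p in P, p \subset S]) => [/exists_inP[p pP pS] | noP]; last first.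
  apply/orP; right; apply: (mono_Kn_paint (b := b) cardS) => [e eS | e pe eS].
    by move/builtPQ/orP => [eP | //]; case/negP: noP; apply/exists_inP; exists e.
  have := monoS e pe eS; rewrite ffunE; case: ifP => // _; case: ifP => // eP.
  by case/negP: noP; apply/exists_inP; exists e.
have [dpq [_ [_ [[u [v [up vq uvR]]] [u' [v' [up' vq' uvB]]]]]]] := indPQ p q pP qQ.
have colour_built x : (x \in red H) || (x \in blue H) -> c x = (x \in red H).
  move=> builtx; rewrite ffunE; case: ifP => [xQ | _].
    by have [_ [_ [/(built_neq_unbuilt builtx)]]] := indPQ p x pP xQ; rewrite eqxx.
  case: ifP => [xP | //].
  by have [_ [/(built_neq_unbuilt builtx)]] := indPQ x q xP qQ; rewrite eqxx.
have [uv_pair uvS] := cross_pair_sub dpq pS qS up vq.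
have [uv_pair' uvS'] := cross_pair_sub dpq pS qS up' vq'.
have := monoS _ uv_pair' uvS'; rewrite colour_built ?uvB ?orbT // (disjointFl dRB uvB).
by have := monoS _ uv_pair uvS; rewrite colour_built ?uvR // => <-.
Qed.

Lemma builder_wins_either_side H P Q :
  ramsey_prop n N -> [disjoint red H & blue H] ->
  {in P, forall p, unbuilt H p} -> {in Q, forall q, unbuilt H q} ->
  (forall e, unbuilt H e -> (e \in P) || (e \in Q)) ->
  (forall p q, p \in P -> q \in Q -> independent H p q) ->
  builder_wins n (maxn #|P| #|Q|) H.
Proof.
move=> ramN dRB unbP unbQ builtPQ indPQ.
case: (boolP [forall f, mono_Kn n (paint H P f)]) => [/forallP monoP | /forallPn[f1 nmono1]].
  apply: (builder_wins_monotone (k := #|P| + 0)); first by rewrite addn0 leq_maxl.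
  by apply: builder_wins_paint unbP _ => f; rewrite builder_wins0; apply: monoP.
apply: (builder_wins_monotone (k := #|Q| + 0)); first by rewrite addn0 leq_maxr.
apply: builder_wins_paint unbQ _ => f2; rewrite builder_wins0.
by have := mono_Kn_paint_either f1 f2 ramN dRB builtPQ indPQ; rewrite (negbTE nmono1).
Qed.

Lemma leq_sG G s : s <= 'C(N, 2) - num_edges G ->
  builder_wins n ('C(N, 2) - num_edges G - s) G -> s <= sG n G.
Proof.
move=> les wins; have ltsC : s < 'C(N, 2).+1 by rewrite ltnS (leq_trans les) ?leq_subr.
by apply: (leq_bigmax_cond (Ordinal ltsC)); rewrite /= les.
Qed.

End Game.

Theorem lemma2p5 (n N : nat) (G : bigraph N) (P Q : {set {set 'I_N}}) :
  3 <= n ->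
  is_ramsey_number n N ->
  is_bichromatic G ->
  (forall p, p \in P -> unbuilt G p) ->
  (forall q, q \in Q -> unbuilt G q) ->
  (forall p q, p \in P -> q \in Q -> independent G p q) ->
  minn #|P| #|Q| <= sG n G.
Proof.
move=> _ [ramN _] bichG unbP unbQ indPQ; have [_ [_ dRB]] := bichG.
have dPQ : [disjoint P & Q].
  rewrite -setI_eq0; apply/eqP/setP => e; rewrite !inE; apply/negP => /andP[eP eQ].
  exact: independent_irrefl (indPQ e e eP eQ).
set U := unbuilt_pairs G; set E0 := U :\: (P :|: Q).
have cardU : #|U| = #|E0| + (#|P| + #|Q|).
  have -> : #|P| + #|Q| = #|U :&: (P :|: Q)|.
    rewrite (setIidPr _); last by apply/subsetP => e; rewrite !inE => /orP[/unbP | /unbQ].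
    by rewrite -(cardsUI P Q) (disjoint_setI0 dPQ) cards0 addn0.
  by rewrite addnC cardsID.
have unbE0 : {in E0, forall e, unbuilt G e} by move=> e; rewrite !inE => /andP[_].
have win : builder_wins n (#|E0| + maxn #|P| #|Q|) G.
  apply: (builder_wins_paint unbE0) => f.
  apply: builder_wins_either_side => // [|p pP | q qQ | e | p q pP qQ].
  - exact: paint_disjoint dRB unbE0.
  - by rewrite unbuilt_paint unbP // !inE pP.
  - by rewrite unbuilt_paint unbQ // !inE qQ orbT.
  - by rewrite unbuilt_paint !inE => /andP[unbe]; rewrite unbe andbT negbK.
  - by apply: independent_paint; rewrite ?inE ?pP ?qQ ?orbT //; apply: indPQ.
have := num_edges_add_unbuilt bichG; rewrite -/U => countG.
apply: leq_sG; first by lia.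
by apply: builder_wins_monotone win; lia.
Qed.
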